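(* Let $d\ge2$ and let $C_1,C_2$ be Archimedean $d$-copulas with strict generators $\phi_1,\phi_2$ that are regularly varying at $0$ with indices $-\alpha_1,-\alpha_2$, where $\alpha_1,\alpha_2\in[0,\infty]$. Then the following are equivalent: (1) $C_1<_{TD}C_2$; (2) $\lambda(C_1)<\lambda(C_2)$; (3) $\alpha_1<\alpha_2$.
   Context: A generator is a continuous, strictly decreasing function $\phi:[0,1]\to[0,\infty]$ with $\phi(1)=0$; it is strict if $\lim_{s\searrow0}\phi(s)=\infty$. A $d$-copula $C$ is Archimedean with strict generator $\phi$ if $C(\boldsymbol u)=\phi^{-1}(\sum_{k=1}^d\phi(u_k))$. $\phi$ is regularly varying at $0$ with index $-\alpha$, $\alpha\in[0,\infty)$, if $\lim_{s\searrow0}\phi(ts)/\phi(s)=t^{-\alpha}$ for all $t>0$; with index $-\infty$ ($\alpha=\infty$) if this limit is $\infty$ for $t\in(0,1)$, $1$ for $t=1$, $0$ for $t>1$. Tail dependence function: $\Lambda(\boldsymbol w;C)=\lim_{s\searrow0}C(s\boldsymbol w)/s$; tail dependence coefficient $\lambda(C)=\Lambda(\boldsymbol 1;C)=\lim_{s\searrow0}C(s,\dots,s)/s$. $C_1<_{TD}C_2$ means $\Lambda(\boldsymbol w;C_1)<\Lambda(\boldsymbol w;C_2)$ for all $\boldsymbol w\in(0,\infty)^d$. *)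

From mathcomp Require Import all_boot all_order all_algebra.
From mathcomp Require Import all_classical all_reals all_analysis.
Set Implicit Arguments. Unset Strict Implicit. Unset Printing Implicit Defensive.
Import Order.TTheory GRing.Theory Num.Theory.
Import numFieldNormedType.Exports.
Local Open Scope classical_set_scope.
Local Open Scope ring_scope.

Section Defs.
Variable R : realType.

Definition in_unit_cube (d : nat) (u : 'I_d -> R) := forall k, 0 <= u k <= 1.

(* d-copula: grounded, uniform margins, d-increasing on [0,1]^d *)
Definition is_copula (d : nat) (C : ('I_d -> R) -> R) : Prop :=
  [/\ (forall u, in_unit_cube u -> (exists k, u k = 0) -> C u = 0),
      (forall u k, in_unit_cube u -> (forall j, j != k -> u j = 1) -> C u = u k) &
      (forall a b, in_unit_cube a -> in_unit_cube b -> (forall k, a k <= b k) ->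
        0 <= \sum_(S : {set 'I_d})
               (-1) ^+ #|~: S| * C (fun k => if k \in S then b k else a k))].

(* generator phi : [0,1] -> [0,+oo] (values outside [0,1] irrelevant) *)
Definition generator (phi : R -> \bar R) : Prop :=
  [/\ {within `[0, 1], continuous phi},
      (forall x, 0 <= x <= 1 -> (0 <= phi x)%E),
      (forall x y, 0 <= x <= 1 -> 0 <= y <= 1 -> x < y -> (phi y < phi x)%E) &
      phi 1 = 0%E].

Definition strict_generator (phi : R -> \bar R) : Prop :=
  generator phi /\ phi x @[x --> 0^'+] --> +oo%E.

Definition gen_inv (phi : R -> \bar R) (t : \bar R) : R :=
  xget 0 [set s : R | 0 <= s <= 1 /\ phi s = t].

Definition archimedean_with (d : nat) (C : ('I_d -> R) -> R) (phi : R -> \bar R) :=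
  forall u, in_unit_cube u -> C u = gen_inv phi (\sum_(k < d) phi (u k))%E.

Definition regvar0 (phi : R -> \bar R) (alpha : \bar R) : Prop :=
  match alpha with
  | a%:E => forall t : R, 0 < t ->
      (fine (phi (t * s)) / fine (phi s)) @[s --> 0^'+] --> t `^ (- a)
  | +oo%E =>
      (forall t : R, 0 < t < 1 ->
        ((fine (phi (t * s)) / fine (phi s))%:E) @[s --> 0^'+] --> +oo%E) /\
      ((fine (phi (1 * s)) / fine (phi s)) @[s --> 0^'+] --> (1 : R)) /\
      (forall t : R, 1 < t ->
        (fine (phi (t * s)) / fine (phi s)) @[s --> 0^'+] --> (0 : R))
  | -oo%E => False
  end.

Definition tdf (d : nat) (C : ('I_d -> R) -> R) (w : 'I_d -> R) : R :=
  lim (C (fun k => s * w k) / s @[s --> 0^'+]).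

Definition tdc (d : nat) (C : ('I_d -> R) -> R) : R := tdf C (fun _ => 1).

Definition lt_TD (d : nat) (C1 C2 : ('I_d -> R) -> R) : Prop :=
  forall w : 'I_d -> R, (forall k, 0 < w k) -> tdf C1 w < tdf C2 w.

End Defs.

From mathcomp Require Import all_boot all_order all_algebra.
From mathcomp Require Import all_classical all_reals all_analysis.
From mathcomp Require Import lra.
Import Order.TTheory GRing.Theory Num.Theory.
Import numFieldNormedType.Exports.
Set Implicit Arguments. Unset Strict Implicit. Unset Printing Implicit Defensive.

(* By the Archimedean form, C(s w) < t s iff sum_k phi(s w_k) > phi(t s).
   Dividing by phi(s), regular variation gives sum_k phi(s w_k) / phi(s) ->
   sum_k w_k^-alpha and phi(t s) / phi(s) -> t^-alpha, so the tail dependence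
   function is Lambda_alpha(w) = (sum_k w_k^-alpha)^(-1/alpha) for
   0 < alpha < oo, 0 for alpha = 0 and min_k w_k for alpha = oo.  For d >= 2
   and every positive w, Lambda_alpha(w) is strictly increasing in alpha (strict
   subadditivity of x |-> x^p for 0 < p < 1), so each of the three comparisons
   is equivalent to alpha1 < alpha2. *)

Local Open Scope classical_set_scope.
Local Open Scope ring_scope.

Section Generator.
Variables (R : realType) (phi : R -> \bar R).
Hypothesis phi_gen : generator phi.

Lemma generator_fineK x : 0 < x <= 1 -> (fine (phi x))%:E = phi x.
Proof.
case: phi_gen => _ phi_ge0 phi_lt _ /andP[x0 x1].
have phi_lt_half : (phi x < phi (x / 2))%E.
  by apply: phi_lt; [apply/andP; split; lra|apply/andP; split; lra|lra].
rewrite fineK // ge0_fin_numE; last by apply: phi_ge0; apply/andP; split; lra.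
exact: lt_le_trans phi_lt_half (leey _).
Qed.

Lemma lt_of_generator_lt x y : 0 <= x <= 1 -> 0 <= y <= 1 ->
  (phi x < phi y)%E -> y < x.
Proof.
case: phi_gen => _ _ phi_lt _ x01 y01 phixy; rewrite ltNge le_eqVlt.
apply/negP => /orP[/eqP xy|xy]; first by rewrite xy ltxx in phixy.
by have := lt_trans phixy (phi_lt _ _ x01 y01 xy); rewrite ltxx.
Qed.

Lemma generator_fine_lt x y : 0 < x -> x < y -> y <= 1 ->
  fine (phi y) < fine (phi x).
Proof.
move=> x0 xy y1; case: phi_gen => _ _ phi_lt _.
rewrite -lte_fin !generator_fineK; last 2 first.
- by apply/andP; split; lra.
- by apply/andP; split; lra.
by apply: phi_lt => //; apply/andP; split; lra.
Qed.

Lemma generator_fine_le x y : 0 < x -> x <= y -> y <= 1 ->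
  fine (phi y) <= fine (phi x).
Proof.
move=> x0; rewrite le_eqVlt => /orP[/eqP -> //|xy] y1.
exact/ltW/generator_fine_lt.
Qed.

Lemma generator_fine_gt0 x : 0 < x < 1 -> 0 < fine (phi x).
Proof.
case/andP=> x0 x1; have := generator_fine_lt x0 x1 (lexx _).
by case: phi_gen => _ _ _ ->.
Qed.

Lemma near0_generator_fine_gt0 : \forall s \near 0^'+, 0 < fine (phi s).
Proof.
near=> s; apply: generator_fine_gt0; apply/andP; split.
  by near: s; exact: nbhs_right_gt.
by near: s; exact: nbhs_right_lt.
Unshelve. all: by end_near.
Qed.

End Generator.

Section StrictGenerator.
Variables (R : realType) (phi : R -> \bar R).
Hypothesis phi_strict : strict_generator phi.

(* Strictness provides [x0] with [phi x0 > T]; then apply the IVT on [x0, 1]. *)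
Lemma strict_generator_onto (T : R) : 0 <= T ->
  exists s, 0 <= s <= 1 /\ phi s = T%:E.
Proof.
case: phi_strict => phi_gen phi_y T0.
have [x0 [phix0 [x0_gt0 x0_lt1]]] :
    exists x0, ((T + 1)%:E < phi x0)%E /\ 0 < x0 /\ x0 < 1.
  apply: (@filter_ex _ _ (at_right_proper_filter 0)); near=> x; split.
    by near: x; exact: (cvgeyPgt _).1 phi_y (T + 1).
  by split; near: x; [exact: nbhs_right_gt|exact: nbhs_right_lt].
case: (phi_gen) => phi_cont _ _ phi1.
have cont : {within `[x0, 1], continuous (fine \o phi)}.
  have : {within `[x0, 1], continuous phi}.
    apply: continuous_subspaceW phi_cont => y /=.
    by rewrite !in_itv /= => /andP[? ?]; apply/andP; split; lra.
  rewrite continuous_subspace_in => phi_cont'.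
  rewrite continuous_subspace_in => x xx; have := phi_cont' x xx.
  move: xx; rewrite inE /= in_itv /= => /andP[? ?] cx.
  by apply: fine_cvg; rewrite /= generator_fineK //; apply/andP; split; lra.
have fx0 : T + 1 < fine (phi x0).
  by rewrite -lte_fin generator_fineK //; apply/andP; split; lra.
have [|c] := @IVT R (fine \o phi) x0 1 T (ltW x0_lt1) cont.
  rewrite /= phi1 /= ge_min le_max; apply/andP; split; apply/orP; [right|left]; lra.
rewrite in_itv /= => /andP[cx0 c1] phic.
have c01 : 0 < c <= 1 by apply/andP; split; lra.
exists c; split; first by apply/andP; split; lra.
by rewrite -(generator_fineK phi_gen c01) -phic.
Unshelve. all: by end_near.
Qed.

Lemma gen_invP (T : R) : 0 <= T ->
  0 <= gen_inv phi T%:E <= 1 /\ phi (gen_inv phi T%:E) = T%:E.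
Proof. by move=> /strict_generator_onto; apply: xgetPex. Qed.

End StrictGenerator.

Section Sums.
Variables (R : realType) (d : nat).
Implicit Types w x : 'I_d -> R.

Lemma ler_sum_term w k : (forall i, 0 <= w i) -> w k <= \sum_i w i.
Proof. by move=> w_ge0; rewrite (bigD1 k) //= lerDl sumr_ge0. Qed.

Lemma ltr_sum_term w k : (1 < d)%N -> (forall i, 0 < w i) -> w k < \sum_i w i.
Proof.
move=> d_gt1 w_gt0.
have [j jk] : exists j : 'I_d, j != k.
  case: k => -[|m] km; first by exists (Ordinal d_gt1).
  by exists (Ordinal (ltnW d_gt1)).
rewrite (bigD1 k) //= ltrDl (bigD1 j) //= ltr_wpDr ?w_gt0 //.
by apply: sumr_ge0 => i _; exact: ltW.
Qed.

Lemma sum_gt0 w : (0 < d)%N -> (forall i, 0 < w i) -> 0 < \sum_i w i.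
Proof.
move=> d_gt0 w_gt0; apply: lt_le_trans (w_gt0 (Ordinal d_gt0)) _.
by apply: ler_sum_term => i; exact: ltW.
Qed.

End Sums.

Section Powers.
Variable R : realType.

Lemma ltr_powRN (a x y : R) : 0 < a -> 0 < x -> 0 < y ->
  (x `^ (- a) < y `^ (- a)) = (y < x).
Proof.
move=> a0 x0 y0.
rewrite -(ltr_ln (x := x `^ _)) ?posrE ?powR_gt0 // !ln_powR !mulNr ltrN2.
by rewrite ltr_pM2l // ltr_ln.
Qed.

Lemma powRNVK (a c : R) : 0 < a -> 0 <= c -> (c `^ (- a^-1)) `^ (- a) = c.
Proof. by move=> a0 c0; rewrite -powRrM mulrNN mulVf ?gt_eqF // powRr1. Qed.

Lemma lt_powR_self (y p : R) : 0 < y < 1 -> 0 < p < 1 -> y < y `^ p.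
Proof.
move=> /andP[y0 y1] /andP[p0 p1].
rewrite -(ltr_ln (x := y)) ?posrE ?powR_gt0 // ln_powR.
have : ln y < 0 by apply: ln_lt0; rewrite y0 y1.
nra.
Qed.

(* Normalising by the sum, every term lies in (0, 1), where x `^ p > x. *)
Lemma powR_sum_lt d (x : 'I_d -> R) (p : R) : (1 < d)%N -> (forall k, 0 < x k) ->
  0 < p < 1 -> (\sum_k x k) `^ p < \sum_k x k `^ p.
Proof.
move=> d_gt1 x_gt0 p01; set S := \sum_k x k.
have S_gt0 : 0 < S by apply: sum_gt0 (ltnW d_gt1) x_gt0.
have xSp k : x k `^ p = S `^ p * (x k / S) `^ p.
  by rewrite -powRM ?divr_ge0 ?(ltW S_gt0) ?(ltW (x_gt0 k)) // mulrC divfK ?gt_eqF.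
rewrite (eq_bigr _ (fun k _ => xSp k)) -mulr_sumr.
rewrite -{1}(mulr1 (S `^ p)) ltr_pM2l ?powR_gt0 //.
have <- : \sum_k x k / S = 1 by rewrite -mulr_suml mulfV ?gt_eqF.
apply: ltr_sum => [|k _].
  by apply/hasP; exists (Ordinal (ltnW d_gt1)); rewrite ?mem_index_enum.
apply: lt_powR_self p01; rewrite divr_gt0 //= ltr_pdivrMr // mul1r.
exact: ltr_sum_term.
Qed.

End Powers.

Section TailFunction.
Variables (R : realType) (d : nat).
Hypothesis d_gt1 : (1 < d)%N.
Variable w : 'I_d -> R.
Hypothesis w_gt0 : forall k, 0 < w k.

Definition rv_tdf (a : R) : R := (\sum_k w k `^ (- a)) `^ (- a^-1).

(* [rv_tdfe i0 alpha] is Lambda_alpha; [i0] only witnesses that ['I_d] is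
   nonempty.  The index 0 is treated separately since [rv_tdf 0 = 1] (as
   [0^-1 = 0]); the index [-oo] never occurs. *)
Definition rv_tdfe (i0 : 'I_d) (alpha : \bar R) : R :=
  match alpha with
  | a%:E => if a == 0 then 0 else rv_tdf a
  | +oo%E => w [arg min_(i < i0) w i]%O
  | -oo%E => 0
  end.

Let d_gt0 : (0 < d)%N := ltnW d_gt1.

Lemma sum_powR_gt0 a : 0 < \sum_k w k `^ (- a).
Proof. by apply: sum_gt0 d_gt0 _ => k; exact: powR_gt0. Qed.

Lemma rv_tdf_gt0 a : 0 < rv_tdf a.
Proof. exact: powR_gt0 (sum_powR_gt0 a). Qed.

Lemma lt_rv_tdf a t : 0 < a -> 0 < t ->
  (t < rv_tdf a) = (\sum_k w k `^ (- a) < t `^ (- a)).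
Proof.
move=> a0 t0.
by rewrite -(ltr_powRN a0 (rv_tdf_gt0 a) t0) powRNVK // ltW ?sum_powR_gt0.
Qed.

Lemma rv_tdf_lt a t : 0 < a -> 0 < t ->
  (rv_tdf a < t) = (t `^ (- a) < \sum_k w k `^ (- a)).
Proof.
move=> a0 t0.
by rewrite -(ltr_powRN a0 t0 (rv_tdf_gt0 a)) powRNVK // ltW ?sum_powR_gt0.
Qed.

Lemma rv_tdf_lt_min a j : 0 < a -> rv_tdf a < w j.
Proof. by move=> a0; rewrite rv_tdf_lt // ltr_sum_term // => k; exact: powR_gt0. Qed.

(* With [x k := w k `^ (- b)] and [p := a / b], this is [powR_sum_lt]. *)
Lemma rv_tdf_ltr a b : 0 < a -> a < b -> rv_tdf a < rv_tdf b.
Proof.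
move=> a0 ab; have b0 : 0 < b by exact: lt_trans ab.
rewrite rv_tdf_lt ?rv_tdf_gt0 // /rv_tdf -powRrM mulrNN mulrC.
have wp k : w k `^ (- a) = (w k `^ (- b)) `^ (a / b).
  by rewrite -powRrM mulNr [b * _]mulrC divfK ?gt_eqF.
rewrite (eq_bigr _ (fun k _ => wp k)); apply: powR_sum_lt => // [k|].
  exact: powR_gt0.
by rewrite divr_gt0 //= ltr_pdivrMr // mul1r.
Qed.

Lemma rv_tdfe_ltr i0 alpha beta : (0 <= alpha)%E -> (alpha < beta)%E ->
  rv_tdfe i0 alpha < rv_tdfe i0 beta.
Proof.
case: alpha beta => [a| |] [b| |] //=; rewrite ?lee_fin ?lte_fin => a0 ab.
- have b0 : 0 < b by exact: le_lt_trans ab.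
  rewrite (gt_eqF b0); case: ifPn => [_|an0]; first exact: rv_tdf_gt0.
  by apply: rv_tdf_ltr ab; rewrite lt_neqAle eq_sym an0.
- case: arg_minP => // j _ _; case: ifPn => [_|an0]; first exact: w_gt0.
  by apply: rv_tdf_lt_min; rewrite lt_neqAle eq_sym an0.
Qed.

End TailFunction.

Section NearZero.
Variable R : realType.

Lemma near0_scale (c : R) (P : R -> Prop) : 0 < c ->
  (\forall x \near 0^'+, P x) -> \forall s \near 0^'+, P (c * s).
Proof.
move=> c0; rewrite !near_withinE => /(@nbhs_norm0P R R^o) [e /= e0 Pe].
apply/(@nbhs_norm0P R R^o); exists (e / c) => /=; first by rewrite divr_gt0.
move=> y /= ye y0; apply: Pe => /=; last by rewrite mulr_gt0.
by rewrite normrM gtr0_norm // mulrC -ltr_pdivlMr.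
Qed.

Lemma near0_scaled_unit (c : R) : 0 < c -> \forall s \near 0^'+, 0 < c * s < 1.
Proof.
move=> c0; apply: (near0_scale (P := fun x => 0 < x < 1) c0).
near=> x; apply/andP; split; near: x; [exact: nbhs_right_gt|exact: nbhs_right_lt].
Unshelve. all: by end_near.
Qed.

Lemma near_lt_of_ratio_cvg (T : Type) (F : set_system T) (FF : Filter F)
    (u v f : T -> R) (lu lv : R) :
  lu < lv -> (\forall x \near F, 0 < f x) ->
  u x / f x @[x --> F] --> lu -> v x / f x @[x --> F] --> lv ->
  \forall x \near F, u x < v x.
Proof.
move=> luv f_gt0 u_cvg v_cvg; set m := (lu + lv) / 2.
have u_lt : \forall x \near F, u x / f x < m by apply: cvgr_lt u_cvg _ _; rewrite /m; lra.
have v_gt : \forall x \near F, m < v x / f x by apply: cvgr_gt v_cvg _ _; rewrite /m; lra.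
near=> x.
have fx : 0 < f x by near: x; exact: f_gt0.
have : u x / f x < v x / f x by apply: (@lt_trans _ _ m); near: x.
by rewrite ltr_pM2r ?invr_gt0.
Unshelve. all: by end_near.
Qed.

Lemma ratio_cvg_squeeze (g : R -> R) (L : R) : 0 <= L ->
  (\forall s \near 0^'+, 0 <= g s) ->
  (forall t, 0 < t < L -> \forall s \near 0^'+, t * s < g s) ->
  (forall t, L < t -> \forall s \near 0^'+, g s < t * s) ->
  g s / s @[s --> 0^'+] --> L.
Proof.
move=> L0 g_ge0 g_gt g_lt; apply/cvgrPdist_lt => e e0.
have lower : \forall s \near 0^'+, 0 < s -> L - e < g s / s.
  have [t_gt0|t_le0] := ltP 0 (L - e / 2).
    have hlt : 0 < L - e / 2 < L by apply/andP; split; lra.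
    apply: filterS (g_gt _ hlt) => s gs s0.
    rewrite ltr_pdivlMr //; apply: le_lt_trans gs.
    by rewrite ler_pM2r //; lra.
  apply: filterS g_ge0 => s gs s0.
  have Le_lt0 : L - e < 0 by lra.
  exact: lt_le_trans Le_lt0 (divr_ge0 gs (ltW s0)).
have upper : \forall s \near 0^'+, g s < (L + e / 2) * s by apply: g_lt; lra.
near=> s; have s0 : 0 < s by near: s; exact: nbhs_right_gt.
rewrite ltr_distlC; apply/andP; split; first by move: s0; near: s.
rewrite ltr_pdivrMr //; apply: lt_le_trans (_ : g s < (L + e / 2) * s) _.
  by near: s.
by rewrite ler_pM2r //; lra.
Unshelve. all: by end_near.
Qed.

End NearZero.

Section ArchimedeanTail.
Variables (R : realType) (d : nat) (C : ('I_d -> R) -> R) (phi : R -> \bar R).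
Hypotheses (phi_strict : strict_generator phi) (C_phi : archimedean_with C phi).
Variable w : 'I_d -> R.
Hypothesis w_gt0 : forall k, 0 < w k.

Let phi_gen : generator phi := phi_strict.1.
Let phi_sum (s : R) : R := \sum_k fine (phi (w k * s)).

Lemma near0_scaled_units : \forall s \near 0^'+, forall k, 0 < w k * s < 1.
Proof. by apply: filter_forall => k; exact: near0_scaled_unit. Qed.

Lemma phi_sum_ge0 s : (forall k, 0 < w k * s < 1) -> 0 <= phi_sum s.
Proof. by move=> ws; apply: sumr_ge0 => k _; exact/ltW/(generator_fine_gt0 phi_gen). Qed.

Lemma near0_archimedean_scaled :
  \forall s \near 0^'+, C (fun k => s * w k) = gen_inv phi (phi_sum s)%:E.
Proof.
apply: filterS near0_scaled_units => s ws.
have unit_ws : in_unit_cube (fun k => s * w k).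
  by move=> k; have /andP[? ?] := ws k; apply/andP; split; lra.
rewrite C_phi // /phi_sum -sumEFin; congr (gen_inv phi _); apply: eq_bigr => k _.
by rewrite mulrC generator_fineK //; have /andP[? ?] := ws k; apply/andP; split; lra.
Qed.

Lemma near0_gen_inv_cmp t : 0 < t -> \forall s \near 0^'+,
  (phi_sum s < fine (phi (t * s)) -> t * s < gen_inv phi (phi_sum s)%:E) /\
  (fine (phi (t * s)) < phi_sum s -> gen_inv phi (phi_sum s)%:E < t * s).
Proof.
move=> t0; near=> s.
have ws : forall k, 0 < w k * s < 1 by near: s; exact: near0_scaled_units.
have [g01 phig] := gen_invP phi_strict (phi_sum_ge0 ws).
have /andP[ts0 ts1] : 0 < t * s < 1 by near: s; exact: near0_scaled_unit.
have ts01 : 0 < t * s <= 1 by rewrite ts0 ltW.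
have ts01' : 0 <= t * s <= 1 by rewrite !ltW.
have phit := esym (generator_fineK phi_gen ts01).
split=> sum_lt; [apply: (lt_of_generator_lt phi_gen g01 ts01')|
                 apply: (lt_of_generator_lt phi_gen ts01' g01)].
all: by rewrite phig phit lte_fin.
Unshelve. all: by end_near.
Qed.

Lemma archimedean_scaled_cvg (L : R) : 0 <= L ->
  (forall t, 0 < t < L -> \forall s \near 0^'+, phi_sum s < fine (phi (t * s))) ->
  (forall t, L < t -> \forall s \near 0^'+, fine (phi (t * s)) < phi_sum s) ->
  C (fun k => s * w k) / s @[s --> 0^'+] --> L.
Proof.
move=> L0 phi_sum_lt phi_sum_gt.
apply: cvg_trans (near_eq_cvg _)
  (ratio_cvg_squeeze (g := fun s => gen_inv phi (phi_sum s)%:E) L0 _ _ _).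
- by apply: filterS near0_archimedean_scaled => s ->.
- apply: filterS near0_scaled_units => s /phi_sum_ge0 /(gen_invP phi_strict).
  by case=> /andP[].
- move=> t /[dup] /andP[t0 _] tL.
  near=> s; have sum_lt : phi_sum s < fine (phi (t * s)) by near: s; exact: phi_sum_lt.
  by move: sum_lt; near: s; apply: filterS (near0_gen_inv_cmp t0) => s [].
- move=> t Lt; have t0 : 0 < t by exact: le_lt_trans Lt.
  near=> s; have sum_gt : fine (phi (t * s)) < phi_sum s by near: s; exact: phi_sum_gt.
  by move: sum_gt; near: s; apply: filterS (near0_gen_inv_cmp t0) => s [].
Unshelve. all: by end_near.
Qed.

Lemma regvar0_sum_cvg a : regvar0 phi a%:E ->
  phi_sum s / fine (phi s) @[s --> 0^'+] --> \sum_k w k `^ (- a).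
Proof.
move=> phi_rv; under eq_cvg do rewrite /phi_sum mulr_suml.
by apply: (@cvg_big R^o 'I_d +%R 0 xpredT add_continuous) => k _; exact: phi_rv.
Qed.

Lemma archimedean_tdf_cvg0 : (1 < d)%N -> regvar0 phi 0%:E ->
  C (fun k => s * w k) / s @[s --> 0^'+] --> 0.
Proof.
move=> d_gt1 phi_rv; apply: archimedean_scaled_cvg (lexx 0) _ _ => [t|t t0].
  by case/andP=> t0 t_lt0; have := lt_trans t0 t_lt0; rewrite ltxx.
apply: near_lt_of_ratio_cvg (near0_generator_fine_gt0 phi_gen) (phi_rv t t0)
  (regvar0_sum_cvg phi_rv).
rewrite oppr0 powRr0; under eq_bigr do rewrite powRr0.
by rewrite sumr_const card_ord ltr1n.
Qed.

Lemma archimedean_tdf_cvg a : (1 < d)%N -> 0 < a -> regvar0 phi a%:E ->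
  C (fun k => s * w k) / s @[s --> 0^'+] --> rv_tdf w a.
Proof.
move=> d_gt1 a0 phi_rv; have tdf_gt0 := rv_tdf_gt0 d_gt1 w_gt0 a.
apply: archimedean_scaled_cvg (ltW tdf_gt0) _ _ => [t /andP[t0 tL]|t Lt].
  rewrite lt_rv_tdf // in tL.
  exact: near_lt_of_ratio_cvg tL (near0_generator_fine_gt0 phi_gen)
    (regvar0_sum_cvg phi_rv) (phi_rv t t0).
have t0 := lt_trans tdf_gt0 Lt; rewrite rv_tdf_lt // in Lt.
exact: near_lt_of_ratio_cvg Lt (near0_generator_fine_gt0 phi_gen)
  (phi_rv t t0) (regvar0_sum_cvg phi_rv).
Qed.

Lemma phi_sum_le_min j s : (forall k, w j <= w k) -> (forall k, 0 < w k * s < 1) ->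
  phi_sum s <= d%:R * fine (phi (w j * s)).
Proof.
move=> wj ws; have /andP[wjs0 _] := ws j.
have s0 : 0 < s by rewrite -(pmulr_rgt0 _ (w_gt0 j)).
apply: le_trans (_ : _ <= \sum_(k < d) fine (phi (w j * s))) _.
  apply: ler_sum => k _; have /andP[_ wks1] := ws k.
  apply: (generator_fine_le phi_gen wjs0 _ (ltW wks1)).
  by rewrite ler_pM2r.
by rewrite sumr_const card_ord mulr_natl.
Qed.

(* For [t < w j], [phi (t s) / phi (w j s)] tends to [+oo], so eventually
   [phi (t s) > d * phi (w j s) >= phi_sum s]. *)
Lemma archimedean_tdf_cvgy j : (forall k, w j <= w k) -> regvar0 phi +oo%E ->
  C (fun k => s * w k) / s @[s --> 0^'+] --> w j.
Proof.
move=> wj [phi_rvy _].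
apply: archimedean_scaled_cvg (ltW (w_gt0 j)) _ _ => [t /andP[t0 tj]|t jt].
  have c01 : 0 < t / w j < 1 by rewrite divr_gt0 //= ltr_pdivrMr // mul1r.
  have ratio_gt := near0_scale (w_gt0 j) ((cvgeyPgt _).1 (phi_rvy _ c01) d%:R).
  near=> s.
  have ws : forall k, 0 < w k * s < 1 by near: s; exact: near0_scaled_units.
  have /andP[wjs0 wjs1] := ws j.
  have : d%:R < fine (phi (t / w j * (w j * s))) / fine (phi (w j * s)).
    by rewrite -lte_fin; near: s; exact: ratio_gt.
  rewrite mulrA divfK ?gt_eqF // ltr_pdivlMr ?(generator_fine_gt0 phi_gen) ?wjs0 //.
  exact: le_lt_trans (phi_sum_le_min wj ws).
have t0 := lt_trans (w_gt0 j) jt.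
near=> s.
have ws : forall k, 0 < w k * s < 1 by near: s; exact: near0_scaled_units.
have /andP[ts0 ts1] : 0 < t * s < 1 by near: s; exact: near0_scaled_unit.
have /andP[wjs0 _] := ws j.
have s0 : 0 < s by rewrite -(pmulr_rgt0 _ (w_gt0 j)).
apply: lt_le_trans (generator_fine_lt phi_gen wjs0 _ (ltW ts1)) _.
  by rewrite ltr_pM2r.
apply: (ler_sum_term (w := fun k => fine (phi (w k * s)))) => k.
by have /andP[? ?] := ws k; apply/ltW/(generator_fine_gt0 phi_gen); apply/andP.
Unshelve. all: by end_near.
Qed.

Lemma tdf_archimedean (i0 : 'I_d) alpha : (1 < d)%N -> (0 <= alpha)%E ->
  regvar0 phi alpha -> tdf C w = rv_tdfe w i0 alpha.
Proof.
move=> d_gt1 alpha_ge0 phi_rv; apply: (cvg_lim (@Rhausdorff R)).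
case: alpha alpha_ge0 phi_rv => [a| |] //= a_ge0 phi_rv.
  case: ifPn => [/eqP a0|a_neq0]; first by subst a; exact: archimedean_tdf_cvg0.
  by apply: archimedean_tdf_cvg; rewrite // lt_neqAle eq_sym a_neq0 -lee_fin.
by case: arg_minP => // j _ wj; apply: archimedean_tdf_cvgy phi_rv => k; exact: wj.
Qed.

End ArchimedeanTail.

Lemma tdf_archimedean_lt (R : realType) (d : nat) (C1 C2 : ('I_d -> R) -> R)
    (phi1 phi2 : R -> \bar R) (alpha1 alpha2 : \bar R) (w : 'I_d -> R) :
  (1 < d)%N -> strict_generator phi1 -> strict_generator phi2 ->
  archimedean_with C1 phi1 -> archimedean_with C2 phi2 ->
  (0 <= alpha1)%E -> (0 <= alpha2)%E -> regvar0 phi1 alpha1 -> regvar0 phi2 alpha2 ->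
  (forall k, 0 < w k) -> tdf C1 w < tdf C2 w <-> (alpha1 < alpha2)%E.
Proof.
move=> d_gt1 phi1_strict phi2_strict C1_phi1 C2_phi2 alpha1_ge0 alpha2_ge0
  phi1_rv phi2_rv w_gt0.
pose i0 : 'I_d := Ordinal (ltnW d_gt1).
rewrite (tdf_archimedean phi1_strict C1_phi1 w_gt0 i0 d_gt1 alpha1_ge0 phi1_rv).
rewrite (tdf_archimedean phi2_strict C2_phi2 w_gt0 i0 d_gt1 alpha2_ge0 phi2_rv).
split=> [|alpha12]; last exact: rv_tdfe_ltr.
apply: contraTT; rewrite -!leNgt le_eqVlt => /orP[/eqP -> //|alpha21].
exact/ltW/rv_tdfe_ltr.
Qed.

Unset Implicit Arguments.

Theorem mainTheorem14 (R : realType) (d : nat) (hd : (2 <= d)%N)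
  (C1 C2 : ('I_d -> R) -> R) (phi1 phi2 : R -> \bar R) (alpha1 alpha2 : \bar R)
  (hC1 : is_copula C1) (hC2 : is_copula C2)
  (hphi1 : strict_generator phi1) (hphi2 : strict_generator phi2)
  (hA1 : archimedean_with C1 phi1) (hA2 : archimedean_with C2 phi2)
  (ha1 : (0 <= alpha1)%E) (ha2 : (0 <= alpha2)%E)
  (hrv1 : regvar0 phi1 alpha1) (hrv2 : regvar0 phi2 alpha2) :
  [/\ (lt_TD C1 C2 <-> tdc C1 < tdc C2),
      (tdc C1 < tdc C2 <-> (alpha1 < alpha2)%E) &
      (lt_TD C1 C2 <-> (alpha1 < alpha2)%E)].
Proof.
have tdf_lt (w : 'I_d -> R) (w_gt0 : forall k, 0 < w k) :=
  tdf_archimedean_lt hd hphi1 hphi2 hA1 hA2 ha1 ha2 hrv1 hrv2 w_gt0.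
have one_gt0 : forall k : 'I_d, (0 : R) < 1 by move=> _; exact: ltr01.
have tdc_lt : tdc C1 < tdc C2 <-> (alpha1 < alpha2)%E := tdf_lt _ one_gt0.
have TD_lt : lt_TD C1 C2 <-> (alpha1 < alpha2)%E.
  by split=> [TD | alpha12 w w_gt0]; [apply/tdc_lt/TD | apply/(tdf_lt w w_gt0)].
split=> //; exact: iff_trans TD_lt (iff_sym tdc_lt).
Qed.
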